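(* Let $G$ be a triangle-free graph on $n\ge1$ vertices and $\lambda>0$. Let $I$ be drawn from the hard-core model on $G$ at fugacity $\lambda$ and, independently, let $v$ be a uniformly random vertex of $G$. Let $Z$ be the number of neighbors $u$ of $v$ that are uncovered, i.e. satisfy $N(u)\cap I=\emptyset$. Then \[ \frac1n\overline\alpha_G(\lambda)=\frac{\lambda}{1+\lambda}\,\mathbb E\big[(1+\lambda)^{-Z}\big]. \] Moreover, if $G$ has maximum degree $d\ge1$, then $\frac1n\overline\alpha_G(\lambda)\ge\frac{\lambda}{1+\lambda}\frac{\mathbb E Z}{d}$, with equality if $G$ is $d$-regular.
   Context: The hard-core model at fugacity $\lambda>0$ on $G$ is the distribution $\Pr[I]=\lambda^{|I|}/P_G(\lambda)$ on independent sets $I$ of $G$, with $P_G(\lambda)=\sum_{J}\lambda^{|J|}$ over all independent sets $J$. $\overline{\alpha}_G(\lambda)=\mathbb E|I|$. $N(u)$ denotes the set of neighbors of $u$. *)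

From HB Require Import structures.
From mathcomp Require Import all_boot all_order all_algebra.
Set Implicit Arguments. Unset Strict Implicit. Unset Printing Implicit Defensive.
Import Order.TTheory GRing.Theory Num.Theory.
Local Open Scope ring_scope.

Definition simple_graph (T : finType) (e : rel T) : Prop :=
  symmetric e /\ irreflexive e.

Definition triangle_free (T : finType) (e : rel T) : Prop :=
  forall x y z : T, e x y -> e y z -> ~~ e x z.

Definition nbhd (T : finType) (e : rel T) (u : T) : {set T} := [set w | e u w].

Definition indep (T : finType) (e : rel T) (I : {set T}) : bool :=
  [forall x in I, forall y in I, ~~ e x y].

Definition indep_poly (R : realFieldType) (T : finType) (e : rel T) (lam : R) : R :=
  \sum_(J : {set T} | indep e J) lam ^+ #|J|.

Definition hc_prob (R : realFieldType) (T : finType) (e : rel T) (lam : R)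
  (I : {set T}) : R :=
  if indep e I then lam ^+ #|I| / indep_poly e lam else 0.

Definition hc_exp (R : realFieldType) (T : finType) (e : rel T) (lam : R)
  (f : {set T} -> R) : R :=
  \sum_(I : {set T} | indep e I) hc_prob e lam I * f I.

Definition alpha_bar (R : realFieldType) (T : finType) (e : rel T) (lam : R) : R :=
  hc_exp e lam (fun I => (#|I|)%:R).

Definition Zcount (T : finType) (e : rel T) (I : {set T}) (v : T) : nat :=
  #|[set u in nbhd e v | [disjoint nbhd e u & I]]|.

Definition joint_exp (R : realFieldType) (T : finType) (e : rel T) (lam : R)
  (g : {set T} -> T -> R) : R :=
  (#|T|%:R)^-1 * \sum_(v : T) hc_exp e lam (fun I => g I v).

Definition max_degree (T : finType) (e : rel T) : nat :=
  \max_(v : T) #|nbhd e v|.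

Definition regular (T : finType) (e : rel T) (d : nat) : Prop :=
  forall v : T, #|nbhd e v| = d.

From HB Require Import structures.
From mathcomp Require Import all_boot all_order all_algebra.
Import Order.TTheory GRing.Theory Num.Theory.
Local Open Scope ring_scope.

Set Implicit Arguments.
Unset Strict Implicit.
Unset Printing Implicit Defensive.

(* Summing over vertices, E|I| is the sum of the probabilities Pr[v \in I].
   Adding or deleting v is a weight-lambda bijection between the independent
   sets containing v and those avoiding v with N(v) \cap I empty, hence
   Pr[v \in I] = lambda/(1+lambda) Pr[N(v) \cap I = set0].
   To compute the latter, group the independent sets I by A = I \ N(v).
   Since G is triangle-free, N(v) is independent and the neighbours of a
   vertex of N(v) avoid N(v); so A :|: B (B a subset of N(v)) is independent
   iff every vertex of B is a neighbour of v left uncovered by A, and B does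
   not change the number Z of such neighbours. The fibre of A thus weighs
   lambda^|A| (1+lambda)^Z, and contains exactly one set (A itself) with
   N(v) \cap I empty: Pr[N(v) \cap I = set0] = E[(1+lambda)^-Z].
   For the bound, double counting gives sum_v E[Z_v] =
   sum_u deg(u) Pr[N(u) \cap I = set0], and deg(u) <= d. *)

Lemma sum_subset_expr (R : comNzRingType) (T : finType) (U : {set T}) (x : R) :
  \sum_(B : {set T} | B \subset U) x ^+ #|B| = (1 + x) ^+ #|U|.
Proof.
rewrite (partition_big (fun B : {set T} => inord #|B| : 'I_#|U|.+1) predT) //=.
rewrite exprDn; apply: eq_bigr => k _.
rewrite (eq_bigl [pred B : {set T} | B \subset U & #|B| == k]); last first.
  move=> B /=; case sBU: (B \subset U) => //=.
  by rewrite -val_eqE /= inordK // ltnS subset_leq_card.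
rewrite (eq_bigr (fun=> x ^+ k)) => [|B /andP[_ /eqP ->]] //.
rewrite sumr_const expr1n mul1r -cards_draws.
by congr (_ *+ _); apply: eq_card => B; rewrite inE.
Qed.

Lemma natr_card (R : nzSemiRingType) (T : finType) (S : {set T}) :
  #|S|%:R = \sum_x (x \in S)%:R :> R.
Proof.
rewrite -sum1_card natr_sum big_mkcond /=.
by apply: eq_bigr => x _; case: (x \in S).
Qed.

Section WeightedSums.

Variables (R : realFieldType) (I : finType) (w : I -> nat) (q : I -> R) (d : nat).
Hypothesis d_gt0 : (0 < d)%N.

Lemma ler_sum_natr_div : (forall i, w i <= d)%N -> (forall i, 0 <= q i) ->
  (\sum_i (w i)%:R * q i) / d%:R <= \sum_i q i.
Proof.
move=> w_le q_ge0; rewrite ler_pdivrMr ?ltr0n // mulr_suml.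
by apply: ler_sum => i _; rewrite mulrC ler_wpM2l ?ler_nat.
Qed.

Lemma sum_natr_div_const : (forall i, w i = d) ->
  (\sum_i (w i)%:R * q i) / d%:R = \sum_i q i.
Proof.
move=> w_d; under eq_bigr do rewrite w_d.
by rewrite -mulr_sumr mulrC mulKf ?pnatr_eq0 -?lt0n.
Qed.

End WeightedSums.

Section Graph.

Variables (T : finType) (e : rel T).

Lemma in_nbhd u x : (x \in nbhd e u) = e u x.
Proof. by rewrite inE. Qed.

Lemma indepP (I : {set T}) :
  reflect (forall x y, x \in I -> y \in I -> ~~ e x y) (indep e I).
Proof.
apply: (iffP forall_inP) => [indepI x y xI yI | indepI x xI].
  exact: (forall_inP (indepI x xI)).
by apply/forall_inP => y; apply: indepI.
Qed.

Lemma indepS (A B : {set T}) : A \subset B -> indep e B -> indep e A.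
Proof.
move=> /subsetP sAB /indepP indepB.
by apply/indepP => x y /sAB xB /sAB; apply: indepB.
Qed.

Lemma indep_disjoint_nbhd (I : {set T}) v :
  indep e I -> v \in I -> [disjoint nbhd e v & I].
Proof.
move=> /indepP indepI vI; rewrite disjoint_sym disjoints_subset.
by apply/subsetP => x xI; rewrite !inE (indepI v x).
Qed.

Definition uncovered_nbrs (v : T) (I : {set T}) : {set T} :=
  [set u in nbhd e v | [disjoint nbhd e u & I]].

Lemma ZcountE I v : Zcount e I v = #|uncovered_nbrs v I|.
Proof. by []. Qed.

Lemma uncovered_nbrs_sub v I : uncovered_nbrs v I \subset nbhd e v.
Proof. by apply/subsetP => u; rewrite inE => /andP[]. Qed.

Hypothesis e_triangle_free : triangle_free e.

Lemma disjoint_nbhd_adj v u : e v u -> [disjoint nbhd e u & nbhd e v].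
Proof.
move=> evu; rewrite disjoints_subset; apply/subsetP => x.
by rewrite !inE => eux; apply: e_triangle_free evu eux.
Qed.

Lemma indep_nbhd v : indep e (nbhd e v).
Proof.
apply/indepP => x y; rewrite !in_nbhd => evx evy.
by apply/negP => /(e_triangle_free evx); rewrite evy.
Qed.

Lemma uncovered_nbrsU v (A B : {set T}) :
  B \subset nbhd e v -> uncovered_nbrs v (A :|: B) = uncovered_nbrs v A.
Proof.
move=> sBN; apply/setP => u.
rewrite !inE !disjoints_subset setCU subsetI -!disjoints_subset.
case evu: (e v u) => //=.
by rewrite (disjointWr sBN (disjoint_nbhd_adj evu)) andbT.
Qed.

Hypothesis e_sym : symmetric e.

Lemma indep_setU_nbhd v (A B : {set T}) :
  indep e A -> [disjoint nbhd e v & A] -> B \subset nbhd e v ->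
  indep e (A :|: B) = (B \subset uncovered_nbrs v A).
Proof.
move=> indepA dvA sBN; apply/idP/subsetP => [/indepP indepAB b bB | sBU].
  rewrite inE (subsetP sBN) //= disjoints_subset; apply/subsetP => x.
  rewrite !inE => ebx; apply: contraL ebx => xA.
  by apply: indepAB; rewrite inE ?xA ?bB ?orbT.
have nbA b a : b \in B -> a \in A -> ~~ e b a.
  move=> /sBU; rewrite inE => /andP[_ dbA] aA.
  by apply: contraL aA => eba; rewrite (disjointFr dbA) ?in_nbhd.
apply/indepP => x y; rewrite !inE => /orP[xA|xB] /orP[yA|yB].
- by move/indepP: indepA; apply.
- by rewrite e_sym nbA.
- exact: nbA.
- by move/indepP: (indep_nbhd v); apply; apply: (subsetP sBN).
Qed.

End Graph.

Section HardCore.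

Variables (R : realFieldType) (T : finType) (e : rel T) (lam : R).

Lemma hc_expE f :
  hc_exp e lam f = (indep_poly e lam)^-1 * \sum_(I | indep e I) lam ^+ #|I| * f I.
Proof.
rewrite /hc_exp mulr_sumr; apply: eq_bigr => I indepI.
by rewrite /hc_prob indepI mulrAC mulrC mulrA.
Qed.

Lemma eq_hc_exp f g : f =1 g -> hc_exp e lam f = hc_exp e lam g.
Proof. by move=> fg; apply: eq_bigr => I _; rewrite fg. Qed.

Lemma hc_exp_sum (F : T -> {set T} -> R) :
  hc_exp e lam (fun I => \sum_v F v I) = \sum_v hc_exp e lam (F v).
Proof. by rewrite /hc_exp; under eq_bigr do rewrite mulr_sumr; exact: exchange_big. Qed.

Lemma hc_expZl c f : hc_exp e lam (fun I => c * f I) = c * hc_exp e lam f.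
Proof. by rewrite /hc_exp mulr_sumr; apply: eq_bigr => I _; rewrite mulrCA. Qed.

Lemma hc_exp_ge0 f : 0 <= lam -> (forall I, 0 <= f I) -> 0 <= hc_exp e lam f.
Proof.
move=> lam_ge0 f_ge0; rewrite hc_expE mulr_ge0 ?invr_ge0 ?sumr_ge0 // => I _.
  by rewrite exprn_ge0.
by rewrite mulr_ge0 ?exprn_ge0.
Qed.

Lemma alpha_bar_sum_mem :
  alpha_bar e lam = \sum_v hc_exp e lam (fun I => (v \in I)%:R).
Proof. by rewrite -hc_exp_sum; apply: eq_hc_exp => I; rewrite natr_card. Qed.

Definition hc_weight (P : pred {set T}) : R :=
  \sum_(I : {set T} | indep e I && P I) lam ^+ #|I|.

Lemma hc_exp_indicator (P : pred {set T}) :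
  hc_exp e lam (fun I => (P I)%:R) = (indep_poly e lam)^-1 * hc_weight P.
Proof.
rewrite hc_expE /hc_weight big_mkcondr /=; congr (_ * _).
by apply: eq_bigr => I _; case: (P I); rewrite ?mulr1 ?mulr0.
Qed.

Lemma hc_weight_uncovered_split v :
  hc_weight (fun I => [disjoint nbhd e v & I]) =
  hc_weight (fun I => v \in I)
  + hc_weight (fun I => [disjoint nbhd e v & I] && (v \notin I)).
Proof.
rewrite /hc_weight (bigID (fun I : {set T} => v \in I)) /=; congr (_ + _); last first.
  by apply: eq_bigl => I; rewrite andbA.
apply: eq_bigl => I; case vI: (v \in I); rewrite ?andbF ?andbT //.
by apply/idP/idP => [/andP[] | indepI] //; rewrite indepI indep_disjoint_nbhd.
Qed.

Hypotheses (e_sym : symmetric e) (e_irr : irreflexive e).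

Lemma hc_weight_mem v :
  hc_weight (fun I => v \in I) =
  lam * hc_weight (fun I => [disjoint nbhd e v & I] && (v \notin I)).
Proof.
rewrite /hc_weight mulr_sumr.
rewrite (reindex_onto (fun J : {set T} => v |: J) (fun I : {set T} => I :\ v)) /=;
  last by move=> I /andP[_ vI]; rewrite setD1K.
apply: eq_big => J; last first.
  by move=> /andP[_ /eqP <-]; rewrite cardsU1 setD11 add1n exprS.
rewrite setU11 andbT; apply/idP/idP => [/andP[indepvJ /eqP <-] | ].
  rewrite setD11 andbT (indepS (subsetDl _ _) indepvJ) /=.
  by rewrite (disjointWr (subsetDl _ _)) // indep_disjoint_nbhd // setU11.
move=> /and3P[indepJ dvJ vJ]; rewrite setU1K // eqxx andbT.
apply/indepP => x y; rewrite !in_setU1 => /orP[/eqP->|xJ] /orP[/eqP->|yJ].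
- by rewrite e_irr.
- by rewrite -in_nbhd (disjointFl dvJ yJ).
- by rewrite e_sym -in_nbhd (disjointFl dvJ xJ).
- by move/indepP: indepJ; apply.
Qed.

Lemma hc_weight_mem_uncovered v :
  (1 + lam) * hc_weight (fun I => v \in I)
  = lam * hc_weight (fun I => [disjoint nbhd e v & I]).
Proof.
rewrite hc_weight_uncovered_split mulrDr -hc_weight_mem.
by rewrite mulrDl mul1r addrC.
Qed.

Hypotheses (e_triangle_free : triangle_free e) (lam1_neq0 : 1 + lam != 0).

Lemma hc_exp_mem_uncovered v :
  hc_exp e lam (fun I => (v \in I)%:R)
  = lam / (1 + lam) * hc_exp e lam (fun I => [disjoint nbhd e v & I]%:R).
Proof.
rewrite !hc_exp_indicator mulrCA; congr (_ * _).
by rewrite mulrAC -hc_weight_mem_uncovered mulrC mulKf.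
Qed.

Lemma hc_fiber_weight v (A : {set T}) : indep e A -> [disjoint nbhd e v & A] ->
  \sum_(I | indep e I && (I :\: nbhd e v == A)) lam ^+ #|I| * (1 + lam) ^- Zcount e I v
  = lam ^+ #|A|.
Proof.
move=> indepA dvA; set N := nbhd e v; set U := uncovered_nbrs e v A.
have dAN : [disjoint A & N] by rewrite disjoint_sym.
rewrite (reindex_onto (fun B : {set T} => A :|: B) (fun I : {set T} => I :&: N)) /=;
  last by move=> I /andP[_ /eqP <-]; rewrite setUC setID.
rewrite (eq_bigl (fun B : {set T} => B \subset U)) => [|B]; last first.
  rewrite setIUl (disjoint_setI0 dAN) set0U (sameP eqP setIidPl).
  have [sBN | nsBN] := boolP (B \subset N); last first.
    rewrite andbF; apply/esym/negbTE; apply: contra nsBN => sBU.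
    exact: subset_trans sBU (uncovered_nbrs_sub e v A).
  move: (sBN); rewrite -setD_eq0 => /eqP BN0.
  rewrite setDUl (setDidPl dAN) BN0 setU0 eqxx !andbT.
  exact: indep_setU_nbhd.
rewrite (eq_bigr (fun B : {set T} => lam ^+ #|A| * (1 + lam) ^- #|U| * lam ^+ #|B|))
  => [|B sBU].
  by rewrite -mulr_sumr sum_subset_expr -mulrA mulVf ?mulr1 ?expf_neq0.
have sBN := subset_trans sBU (uncovered_nbrs_sub e v A).
have dAB : [disjoint A & B] by rewrite (disjointWr sBN).
rewrite ZcountE uncovered_nbrsU // cardsU (disjoint_setI0 dAB) cards0 subn0.
by rewrite exprD mulrAC.
Qed.

Lemma hc_exp_uncovered_Zcount v :
  hc_exp e lam (fun I => [disjoint nbhd e v & I]%:R)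
  = hc_exp e lam (fun I => (1 + lam) ^- Zcount e I v).
Proof.
rewrite hc_exp_indicator hc_expE /hc_weight; congr (_ * _).
rewrite [RHS](partition_big (fun I : {set T} => I :\: nbhd e v)
           (fun A : {set T} => indep e A && [disjoint nbhd e v & A])) /=; last first.
  move=> I indepI; rewrite (indepS (subsetDl _ _) indepI) /=.
  by rewrite disjoint_sym disjoints_subset subsetDr.
by apply: eq_bigr => A /andP[indepA dvA]; rewrite hc_fiber_weight.
Qed.

Lemma sum_hc_exp_Zcount :
  \sum_v hc_exp e lam (fun I => (Zcount e I v)%:R)
  = \sum_u #|nbhd e u|%:R * hc_exp e lam (fun I => [disjoint nbhd e u & I]%:R).
Proof.
transitivity
  (\sum_v \sum_u (e v u)%:R * hc_exp e lam (fun I => [disjoint nbhd e u & I]%:R)).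
  apply: eq_bigr => v _; under eq_bigr do rewrite -hc_expZl.
  rewrite -hc_exp_sum; apply: eq_hc_exp => I; rewrite ZcountE natr_card.
  by apply: eq_bigr => u _; rewrite !inE -natrM mulnb.
rewrite exchange_big; apply: eq_bigr => u _; rewrite -mulr_suml natr_card.
by congr (_ * _); apply: eq_bigr => v _; rewrite in_nbhd e_sym.
Qed.

End HardCore.

Theorem mainTheorem7 (R : realFieldType) (T : finType) (e : rel T) (lam : R) :
  simple_graph e -> triangle_free e -> (0 < #|T|)%N -> 0 < lam ->
  (#|T|%:R)^-1 * alpha_bar e lam
    = lam / (1 + lam) * joint_exp e lam (fun I v => (1 + lam) ^- (Zcount e I v))
  /\
  (forall d : nat, (1 <= d)%N -> max_degree e = d ->
     (#|T|%:R)^-1 * alpha_bar e lam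
       >= lam / (1 + lam) * (joint_exp e lam (fun I v => (Zcount e I v)%:R) / d%:R)
     /\
     (regular e d ->
       (#|T|%:R)^-1 * alpha_bar e lam
         = lam / (1 + lam) * (joint_exp e lam (fun I v => (Zcount e I v)%:R) / d%:R))).
Proof.
move=> [e_sym e_irr] e_tf _ lam_gt0.
have lam1 : 1 + lam != 0 by rewrite gt_eqF ?addr_gt0.
pose q u := hc_exp e lam (fun I => [disjoint nbhd e u & I]%:R).
have alphaE : (#|T|%:R)^-1 * alpha_bar e lam
              = lam / (1 + lam) * ((#|T|%:R)^-1 * \sum_u q u).
  rewrite alpha_bar_sum_mem [RHS]mulrCA [in RHS]mulr_sumr; congr (_ * _).
  by apply: eq_bigr => v _; apply: hc_exp_mem_uncovered.
split.
  rewrite alphaE /joint_exp; congr (_ * (_ * _)); apply: eq_bigr => u _.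
  exact: hc_exp_uncovered_Zcount.
move=> d d_gt0 maxd.
have deg_le u : (#|nbhd e u| <= d)%N by rewrite -maxd; apply: leq_bigmax.
have q_ge0 u : 0 <= q u by apply: hc_exp_ge0 => [|I]; [exact: ltW | exact: ler0n].
rewrite alphaE /joint_exp sum_hc_exp_Zcount // -(mulrA _ _ d%:R^-1).
split=> [|d_reg].
  rewrite ler_pM2l ?divr_gt0 ?addr_gt0 //.
  by apply: ler_wpM2l; [rewrite invr_ge0 | exact: ler_sum_natr_div].
by rewrite (sum_natr_div_const _ d_gt0 d_reg).
Qed.
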